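(* Let $X$ be as in the standing setting with skeleton $X_1,\dots,X_k$. If $x\in X$ does not lie in $\operatorname{span}X_i$ for any $i$, then there exist indices $i\ne j$ and points $x_i\in X_i$, $x_j\in X_j$ such that $x\in\operatorname{pos}\{x_i,x_j\}$.
   Context: Standing setting: $X\subset\mathbb R^n\setminus\{0\}$ is a finite set such that $0$ lies in the interior of $\operatorname{conv}X$, no element of $X$ is a positive multiple of another, and every $n+1$ points of $X$ are in good position. A finite set $A$ is in conical position if $0\notin\operatorname{conv}A$ and no point of $A$ lies in the positive hull (set of nonnegative linear combinations, denoted $\operatorname{pos}$) of the other points; it is in good position otherwise. A skeleton of $X$ is a collection of pairwise disjoint subsets $X_1,\dots,X_k\subseteq X$ such that each $X_i$ is the vertex set of a simplex whose relative interior contains $0$ and $\mathbb R^n=\operatorname{span}X_1\oplus\cdots\oplus\operatorname{span}X_k$. *)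

(* Points of R^n are row vectors 'rV[R]_n over R : realType.
   Finite sets of points are represented by sequences (membership = set). *)
From HB Require Import structures.
From mathcomp Require Import all_boot all_order all_algebra.
From mathcomp Require Import reals.
Set Implicit Arguments. Unset Strict Implicit. Unset Printing Implicit Defensive.
Import Order.TTheory GRing.Theory Num.Theory.
Local Open Scope ring_scope.

Section Defs.
Variables (R : realType) (n : nat).
Local Notation V := 'rV[R]_n.

Definition in_conv (A : seq V) (v : V) : Prop :=
  exists c : 'I_(size A) -> R,
    (forall i, 0 <= c i) /\ \sum_(i < size A) c i = 1 /\
    v = \sum_(i < size A) c i *: A`_i.

Definition in_aff (A : seq V) (v : V) : Prop :=
  exists c : 'I_(size A) -> R,
    \sum_(i < size A) c i = 1 /\ v = \sum_(i < size A) c i *: A`_i.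

Definition in_pos (A : seq V) (v : V) : Prop :=
  exists c : 'I_(size A) -> R,
    (forall i, 0 <= c i) /\ v = \sum_(i < size A) c i *: A`_i.

Definition in_interior_conv (A : seq V) (v : V) : Prop :=
  exists2 e : R, 0 < e &
    forall w : V, (forall j, `|w 0 j - v 0 j| < e) -> in_conv A w.

Definition in_relint_conv (A : seq V) (v : V) : Prop :=
  in_conv A v /\
  exists2 e : R, 0 < e &
    forall w : V, in_aff A w -> (forall j, `|w 0 j - v 0 j| < e) -> in_conv A w.

Definition aff_indep (A : seq V) : Prop :=
  uniq A /\
  forall c : 'I_(size A) -> R,
    \sum_(i < size A) c i = 0 -> \sum_(i < size A) c i *: A`_i = 0 ->
    forall i, c i = 0.

Definition conical_position (A : seq V) : Prop :=
  ~ in_conv A 0 /\ forall a, a \in A -> ~ in_pos (filter (predC1 a) A) a.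

Definition good_position (A : seq V) : Prop := ~ conical_position A.

Definition standing (X : seq V) : Prop :=
  [/\ 0 \notin X,
      in_interior_conv X 0,
      (forall x y, x \in X -> y \in X -> x != y ->
         ~ exists2 t : R, 0 < t & y = t *: x) &
      (forall A : seq V, uniq A -> size A = n.+1 -> {subset A <= X} ->
         good_position A)].

Definition skeleton (X : seq V) (k : nat) (Xs : 'I_k -> seq V) : Prop :=
  [/\ (forall i, {subset Xs i <= X}),
      (forall i j, i != j -> forall x, x \in Xs i -> x \notin Xs j),
      (forall i, aff_indep (Xs i) /\ in_relint_conv (Xs i) 0),
      (\sum_(i < k) <<Xs i>>)%VS = fullv &
      directv (\sum_(i < k) <<Xs i>>)%VS].

End Defs.

(* Each block X_i is a simplex with 0 in its relative interior, so its points
   carry a positive linear dependence; consequently every y in span X_i is a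
   nonnegative combination of X_i vanishing at some vertex (simplex_cone),
   and removing any one vertex of each block leaves a basis of R^n
   (skeleton_basis).  Write x = sum_i y_i along the direct sum and the y_i in
   this cone form.  If blocks i0 != j1 both contribute, pivot block i0 at a
   vertex of positive weight and remove one vertex per block: x together
   with the resulting basis F are n + 1 points of X, hence in good position,
   while the coordinates of x in F take both signs.  An elementary analysis
   of the three ways good position can occur (SignPattern) shows that x then
   has a single positive coordinate outside block i0 (concentration).  Doing
   this with both blocks in both roles shows that exactly two blocks
   contribute, each along a single vertex, which is the claim. *)

From Pilot Require Import Defs.
From mathcomp Require Import all_boot all_order all_algebra.
From mathcomp Require Import reals boolp.
From mathcomp Require Import ring lra.
Import Order.TTheory GRing.Theory Num.Theory.
Local Open Scope ring_scope.
Set Implicit Arguments. Unset Strict Implicit. Unset Printing Implicit Defensive.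

Section Coefficients.
Variables (R : realType) (n : nat).
Local Notation V := 'rV[R]_n.
Implicit Types (A : seq V) (v : V).

(* The predicates of Defs index coefficients by positions in A; for a
   duplicate-free A we rather index them by the points themselves. *)
Definition point_coef A (c : 'I_(size A) -> R) (a : V) : R :=
  \sum_(i < size A | A`_i == a) c i.

Lemma point_coefE A c (i : 'I_(size A)) : uniq A -> point_coef c A`_i = c i.
Proof. by move=> uA; rewrite /point_coef (big_pred1 i) // => j /=; rewrite nth_uniq. Qed.

Lemma big_seq_nth (T : nmodType) A (G : V -> T) :
  \sum_(a <- A) G a = \sum_(i < size A) G A`_i.
Proof. by rewrite (big_nth 0) big_mkord. Qed.

Lemma big_point_coef A (c : 'I_(size A) -> R) : uniq A ->
  \sum_(i < size A) c i *: A`_i = \sum_(a <- A) point_coef c a *: a.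
Proof. by move=> uA; rewrite big_seq_nth; apply: eq_bigr => i _; rewrite point_coefE. Qed.

Lemma point_coef_ge0 A (c : 'I_(size A) -> R) :
  (forall i, 0 <= c i) -> forall a, 0 <= point_coef c a.
Proof. by move=> c0 a; apply: sumr_ge0 => i _. Qed.

Lemma in_pos_coef A v : uniq A -> in_pos A v ->
  exists f : V -> R, (forall a, 0 <= f a) /\ v = \sum_(a <- A) f a *: a.
Proof.
move=> uA [c [c0 ->]]; exists (point_coef c).
by split; [exact: point_coef_ge0 | exact: big_point_coef].
Qed.

Lemma in_conv_coef A v : uniq A -> in_conv A v ->
  exists f : V -> R, [/\ (forall a, 0 <= f a), \sum_(a <- A) f a = 1 &
     v = \sum_(a <- A) f a *: a].
Proof.
move=> uA [c [c0 [c1 ->]]]; exists (point_coef c); split.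
- exact: point_coef_ge0.
- by rewrite big_seq_nth -c1; apply: eq_bigr => i _; rewrite point_coefE.
- exact: big_point_coef.
Qed.

Lemma span_coef A v : uniq A -> v \in <<A>>%VS ->
  exists c : V -> R, v = \sum_(a <- A) c a *: a.
Proof.
move=> uA; rewrite -[A]in_tupleE => /coord_span ->.
by exists (point_coef (fun i => coord (in_tuple A) i v)); rewrite big_point_coef.
Qed.

Lemma nth_position A a : a \in A -> exists i : 'I_(size A), A`_i = a.
Proof.
move=> aA; have ia : (index a A < size A)%N by rewrite index_mem.
by exists (Ordinal ia); rewrite /= nth_index.
Qed.

Lemma free_coef A : uniq A -> free A <->
  (forall g : V -> R, \sum_(a <- A) g a *: a = 0 -> {in A, forall a, g a = 0}).
Proof.
move=> uA; have /= freeA := @freeP _ _ _ (in_tuple A).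
split=> [/freeA Hfree g g0 a /nth_position [i <-] | H].
  by apply: (Hfree (fun i => g A`_i)); rewrite -(big_seq_nth A (fun a => g a *: a)).
apply/freeA => c hc i; rewrite -point_coefE //.
by apply: H (mem_nth 0 (ltn_ord i)); rewrite -big_point_coef.
Qed.

Lemma aff_indep_coef A : aff_indep A -> forall g : V -> R,
  \sum_(a <- A) g a = 0 -> \sum_(a <- A) g a *: a = 0 -> {in A, forall a, g a = 0}.
Proof.
move=> [_ Hind] g g0 gv a /nth_position [i <-].
apply: (Hind (fun i => g A`_i)); first by rewrite -(big_seq_nth A g).
by rewrite -(big_seq_nth A (fun a => g a *: a)).
Qed.

Lemma in_pos_pair (a b v : V) (s t : R) : 0 <= s -> 0 <= t ->
  v = s *: a + t *: b -> in_pos [:: a; b] v.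
Proof.
move=> s0 t0 ->; exists (fun i : 'I_2 => if val i == 0%N then s else t).
by split=> [i|]; [case: ifP | rewrite !big_ord_recr big_ord0 /= add0r].
Qed.

Lemma single_support A (c : V -> R) s v : uniq A ->
  {in A, forall b, b != s -> c b = 0} -> v = \sum_(b <- A) c b *: b -> v != 0 ->
  s \in A /\ v = c s *: s.
Proof.
move=> uA cs vA v0; have sA : s \in A.
  apply: contraNT v0 => sA; rewrite vA big_seq big1 // => b bA.
  by rewrite cs ?scale0r //; apply: contraNneq sA => <-.
split=> //; rewrite vA (bigD1_seq s) //= big_seq_cond big1 ?addr0 // => b /andP[bA bs].
by rewrite cs ?scale0r.
Qed.

End Coefficients.

Section Simplex.
Variables (R : realType) (n : nat).
Local Notation V := 'rV[R]_n.
Implicit Types (A : seq V) (v : V).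

Lemma conv_nonempty A v : in_conv A v -> A != [::].
Proof. by case: A => [[c [_ []]]|//]; rewrite big_ord0 => /eqP; rewrite eq_sym oner_eq0. Qed.

(* If 0 is in the relative interior of conv A, then for small d > 0 the point
   - d * (sum of the points of A), which lies in aff A, is still in conv A. *)
Lemma relint_shift A : in_relint_conv A 0 ->
  exists2 d : R, 0 < d & in_conv A (- d *: \sum_(a <- A) a).
Proof.
move=> [[c [c0 [c1 e0]]] [e e_gt0 He]].
set b := \sum_(a <- A) a; set M := 1 + \sum_(j < n) `|b 0 j|.
have M_gt0 : 0 < M by rewrite ltr_pwDl // sumr_ge0.
set d := e / (M + M); have d_gt0 : 0 < d by rewrite divr_gt0 // addr_gt0.
exists d => //; apply: He => [|j].
  pose c' i := (1 + d * (size A)%:R) * c i - d; exists c'; split.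
    rewrite sumrB -mulr_sumr c1 sumr_const card_ord -mulr_natr; ring.
  under eq_bigr do rewrite /c' scalerBl -scalerA.
  rewrite sumrB -scaler_sumr -e0 scaler0 sub0r -scaler_sumr scaleNr.
  by rewrite /b (big_seq_nth A id).
have hj : `|b 0 j| <= M - 1.
  by rewrite addrAC subrr add0r (bigD1 j) //= lerDl sumr_ge0.
have hd : d * (M + M) = e by rewrite /d divfK // gt_eqF // addr_gt0.
rewrite !mxE subr0 normrM normrN (gtr0_norm d_gt0); nra.
Qed.

Lemma relint_dependence A : uniq A -> in_relint_conv A 0 ->
  exists alpha : V -> R,
    {in A, forall a, 0 < alpha a} /\ \sum_(a <- A) alpha a *: a = 0.
Proof.
move=> uA /relint_shift [d d_gt0 /(in_conv_coef uA) [f [f0 _ fv]]].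
exists (fun a => f a + d); split=> [a _|]; first by rewrite ltr_pwDr.
under eq_bigr do rewrite scalerDl.
by rewrite big_split /= -scaler_sumr -fv scaleNr addNr.
Qed.

Lemma big_drop_zero A p (g : V -> R) : uniq A -> p \in A -> g p = 0 ->
  \sum_(a <- A) g a *: a = \sum_(a <- filter (predC1 p) A) g a *: a.
Proof. by move=> uA pA gp; rewrite (bigD1_seq p) //= gp scale0r add0r big_filter. Qed.

Lemma seq_argmin A (f : V -> R) : A != [::] ->
  exists2 q, q \in A & {in A, forall a, f q <= f a}.
Proof.
elim: A => [//|a A' IH] _; have [->|/IH [q qA Hq]] := eqVneq A' [::].
  by exists a; rewrite ?mem_seq1 // => b; rewrite mem_seq1 => /eqP->.
have [h|h] := lerP (f a) (f q).
  exists a => [|b]; first exact: mem_head.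
  by rewrite in_cons => /orP[/eqP->//|/Hq]; apply: le_trans.
exists q => [|b]; first by rewrite in_cons qA orbT.
by rewrite in_cons => /orP[/eqP->|/Hq//]; apply: ltW.
Qed.

Section PositiveDependence.
Variables (A : seq V) (alpha : V -> R).
Hypothesis alpha_gt0 : {in A, forall a, 0 < alpha a}.
Hypothesis alpha_dep : \sum_(a <- A) alpha a *: a = 0.

Lemma shift_combination (c : V -> R) (t : R) :
  \sum_(a <- A) (c a - t * alpha a) *: a = \sum_(a <- A) c a *: a.
Proof.
under eq_bigr do rewrite scalerBl -scalerA.
by rewrite sumrB -scaler_sumr alpha_dep scaler0 subr0.
Qed.

Lemma facet_span p : uniq A -> p \in A ->
  <<filter (predC1 p) A>>%VS = <<A>>%VS.
Proof.
move=> uA pA; apply/eqP; rewrite eqEsubv; apply/andP; split.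
  by apply: sub_span => a; rewrite mem_filter => /andP[].
apply/span_subvP => a aA; have [->|ap] := eqVneq a p; last first.
  by apply: memv_span; rewrite mem_filter /= ap.
have alpha_p : alpha p != 0 by rewrite gt_eqF ?alpha_gt0.
have hp : p = - (alpha p)^-1 *: \sum_(a <- filter (predC1 p) A) alpha a *: a.
  move: alpha_dep; rewrite (bigD1_seq p) //= -big_filter => /eqP; rewrite addr_eq0.
  by move=> /eqP hp; rewrite scaleNr -scalerN -hp scalerA mulVf // scale1r.
rewrite {1}hp rpredZ // big_seq rpred_sum // => b bB.
by rewrite rpredZ // memv_span.
Qed.

Lemma facet_free p : aff_indep A -> p \in A -> free (filter (predC1 p) A).
Proof.
move=> hA pA; apply/(free_coef (filter_uniq _ hA.1)) => g g0 b.
rewrite mem_filter => /andP[/= bp bA].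
have T_gt0 : 0 < \sum_(a <- A) alpha a.
  rewrite (bigD1_seq p) ?hA.1 //= ltr_pwDl ?alpha_gt0 //.
  by rewrite big_seq_cond sumr_ge0 // => a /andP[aA _]; rewrite ltW ?alpha_gt0.
pose l := - (\sum_(a <- filter (predC1 p) A) g a) / \sum_(a <- A) alpha a.
pose h a := (if a != p then g a else 0) + l * alpha a.
have hz : {in A, forall a, h a = 0}.
  apply: aff_indep_coef hA _ _ _.
    rewrite big_split /= -mulr_sumr -big_mkcond -big_filter /l.
    by field; rewrite gt_eqF.
  under eq_bigr do rewrite scalerDl -scalerA.
  rewrite big_split /= -scaler_sumr alpha_dep scaler0 addr0 -[RHS]g0.
  rewrite big_filter [RHS]big_mkcond; apply: eq_bigr => a _ /=.
  by case: ifP => _ //; rewrite scale0r.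
have l0 : l = 0.
  have /eqP := hz p pA; rewrite /h eqxx add0r mulf_eq0 (gt_eqF (alpha_gt0 pA)).
  by rewrite orbF => /eqP.
by have := hz b bA; rewrite /h bp l0 mul0r addr0.
Qed.

(* Pivoting: if c p > 0 and c q = 0, subtracting the right multiple of the
   dependence kills the coefficient of p and makes that of q negative. *)
Lemma pivot_combination (c : V -> R) p q : uniq A -> p \in A -> q \in A ->
  0 < c p -> c q = 0 -> exists d : V -> R, d q < 0 /\
  \sum_(a <- A) c a *: a = \sum_(a <- filter (predC1 p) A) d a *: a.
Proof.
move=> uA pA qA cp cq; set t := c p / alpha p.
exists (fun a => c a - t * alpha a); split.
  by rewrite cq sub0r oppr_lt0 mulr_gt0 ?divr_gt0 ?alpha_gt0.
rewrite -(big_drop_zero uA pA); first by rewrite shift_combination.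
by rewrite /t divfK ?subrr // gt_eqF ?alpha_gt0.
Qed.

(* Each vector of span A is a nonnegative combination of the points of A in
   which some coefficient vanishes: subtract the largest multiple of the
   positive dependence that keeps all coefficients nonnegative. *)
Lemma simplex_cone v : uniq A -> A != [::] -> v \in <<A>>%VS ->
  exists q, exists c : V -> R, [/\ q \in A, {in A, forall a, 0 <= c a},
    c q = 0 & v = \sum_(a <- A) c a *: a].
Proof.
move=> uA An0 /(span_coef uA) [c ->].
have [q qA Hq] := seq_argmin (fun a => c a / alpha a) An0.
set t := c q / alpha q; exists q, (fun a => c a - t * alpha a); split=> //.
- move=> a aA; rewrite subr_ge0.
  by have := Hq a aA; rewrite ler_pdivlMr ?alpha_gt0.
- by rewrite /t divfK ?subrr // gt_eqF ?alpha_gt0.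
- by rewrite shift_combination.
Qed.

End PositiveDependence.
End Simplex.

Section SkeletonBasis.
Variables (R : realType) (n k : nat).
Local Notation V := 'rV[R]_n.
Variables (Xs : 'I_k -> seq V) (alpha : 'I_k -> V -> R) (r : 'I_k -> V).
Hypothesis Xs_aff : forall i, aff_indep (Xs i).
Hypothesis alpha_gt0 : forall i, {in Xs i, forall a, 0 < alpha i a}.
Hypothesis alpha_dep : forall i, \sum_(a <- Xs i) alpha i a *: a = 0.
Hypothesis Xs_direct : directv (\sum_(i < k) <<Xs i>>)%VS.
Hypothesis r_in : forall i, r i \in Xs i.

Definition punctured i := filter (predC1 (r i)) (Xs i).
Definition skeleton_basis := \big[cat/[::]]_(i < k) punctured i.

Lemma big_skeleton_basis (T : nmodType) (G : V -> T) :
  \sum_(b <- skeleton_basis) G b = \sum_(i < k) \sum_(b <- punctured i) G b.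
Proof.
by rewrite (big_morph (fun s => \sum_(b <- s) G b) (fun s1 s2 => big_cat _ _ _ _ _)
  (big_nil _ _ _ _)).
Qed.

Lemma mem_skeleton_basis b : (b \in skeleton_basis) = [exists i, b \in punctured i].
Proof.
rewrite -has_pred1.
rewrite (big_morph (has (pred1 b)) (fun s1 s2 => has_cat _ s1 s2) (erefl (has _ [::]))).
by rewrite big_orE; apply: eq_existsb => i; apply: has_pred1.
Qed.

Lemma mem_punctured i b : (b \in punctured i) = (b != r i) && (b \in Xs i).
Proof. by rewrite mem_filter. Qed.

Lemma punctured_sub i b : b \in punctured i -> b \in Xs i.
Proof. by rewrite mem_punctured => /andP[]. Qed.

Lemma punctured_basis i b : b \in punctured i -> b \in skeleton_basis.
Proof. by move=> bi; rewrite mem_skeleton_basis; apply/existsP; exists i. Qed.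

(* Each punctured block still spans its block (facet_span), so the punctured
   blocks are free and independent, and together have n points. *)
Lemma span_punctured i : <<punctured i>>%VS = <<Xs i>>%VS.
Proof. by rewrite /punctured (facet_span (@alpha_gt0 i) (alpha_dep i) (Xs_aff i).1 (r_in i)). Qed.

Lemma free_skeleton_basis : free skeleton_basis.
Proof.
apply: bigcat_free => [|i _]; last first.
  by rewrite /punctured (facet_free (@alpha_gt0 i) (alpha_dep i) (Xs_aff i) (r_in i)).
apply/directv_sum_independent => us Hus us0 i _.
move/directv_sum_independent: Xs_direct; apply=> // j _.
by rewrite -span_punctured; apply: Hus.
Qed.

Lemma size_skeleton_basis : (\sum_(i < k) <<Xs i>>)%VS = fullv ->
  size skeleton_basis = n.
Proof.
move=> Xs_full; have /eqP <- := free_skeleton_basis.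
rewrite span_bigcat (eq_bigr _ (fun i _ => span_punctured i)) Xs_full.
by rewrite dimvf dim_matrix [LHS]mul1n.
Qed.

Hypothesis Xs_disjoint : forall i j, i != j -> forall b, b \in Xs i -> b \notin Xs j.

Lemma skeleton_coord (coef : 'I_k -> V -> R) : exists e : V -> R,
  (forall i b, b \in punctured i -> e b = coef i b) /\
  \sum_(i < k) \sum_(b <- punctured i) coef i b *: b =
  \sum_(b <- skeleton_basis) e b *: b.
Proof.
pose e b := \sum_(i < k) (if b \in punctured i then coef i b else 0).
have he i b : b \in punctured i -> e b = coef i b.
  move=> bi; rewrite /e (bigD1 i) //= bi big1 ?addr0 // => j ji.
  case: ifP => // bj; move: bi bj; rewrite !mem_punctured => /andP[_ bi] /andP[_ bj].
  by have := Xs_disjoint ji bj; rewrite bi.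
exists e; split=> //; rewrite big_skeleton_basis; apply: eq_bigr => i _.
by apply: eq_big_seq => b bi; rewrite (he i).
Qed.

End SkeletonBasis.

(* Let x lie in the span of a free family F of points, with coordinates e.
   Which of the conditions of good position x :: F satisfies is governed by
   the sign pattern of e. *)
Section SignPattern.
Variables (R : realType) (n : nat).
Local Notation V := 'rV[R]_n.
Variables (F : seq V) (x : V) (e : V -> R).
Hypothesis F_free : free F.
Hypothesis x_notin : x \notin F.
Hypothesis x_coord : x = \sum_(b <- F) e b *: b.

Let F_uniq : uniq F := free_uniq F_free.
Let F_indep : forall g : V -> R,
    \sum_(b <- F) g b *: b = 0 -> {in F, forall b, g b = 0} :=
  (free_coef F_uniq).1 F_free.

Lemma conv_excluded b1 : b1 \in F -> 0 < e b1 -> ~ in_conv (x :: F) 0.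
Proof.
have uxF : uniq (x :: F) by rewrite /= x_notin F_uniq.
move=> b1F eb1 /(in_conv_coef uxF) [f [f0 f1 fv]].
have fz : {in F, forall b, f x * e b + f b = 0}.
  apply: F_indep; under eq_bigr do rewrite scalerDl -scalerA.
  by rewrite big_split /= -scaler_sumr -x_coord [RHS]fv big_cons.
have fx0 : f x = 0 by have := fz b1 b1F; have := f0 b1; have := f0 x; nra.
move: f1; rewrite big_cons fx0 add0r big_seq big1 => [/eqP|b bF].
  by rewrite eq_sym oner_eq0.
by have := fz b bF; rewrite fx0 mul0r add0r.
Qed.

Lemma pos_excluded b0 : b0 \in F -> e b0 < 0 -> ~ in_pos F x.
Proof.
move=> b0F eb0 /(in_pos_coef F_uniq) [g [g0 gv]].
have gz : {in F, forall b, e b - g b = 0}.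
  apply: F_indep; under eq_bigr do rewrite scalerBl.
  by rewrite sumrB -x_coord -gv subrr.
by have := gz b0 b0F; have := g0 b0; lra.
Qed.

Lemma facet_sign a : a \in F -> in_pos (filter (predC1 a) (x :: F)) a ->
  {in F, forall b, b != a -> e b <= 0}.
Proof.
move=> aF; have xa : x != a by apply: contraNneq x_notin => ->.
have u : uniq (x :: filter (predC1 a) F).
  by rewrite /= mem_filter negb_and x_notin orbT filter_uniq.
rewrite /= xa => /(in_pos_coef u) [f [f0 fv]].
have a_coord : a = \sum_(b <- F) (if b == a then 1 else 0) *: b.
  rewrite (bigD1_seq a) //= eqxx scale1r big1 ?addr0 // => b /negbTE ->.
  by rewrite scale0r.
have fz : {in F, forall b, f x * e b + (if b != a then f b else 0)
                         - (if b == a then 1 else 0) = 0}.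
  apply: F_indep; under eq_bigr do rewrite scalerBl scalerDl -scalerA.
  rewrite sumrB big_split /= -scaler_sumr -x_coord -a_coord.
  have -> : \sum_(b <- F) (if b != a then f b else 0) *: b =
            \sum_(b <- filter (predC1 a) F) f b *: b.
    rewrite big_filter [RHS]big_mkcond; apply: eq_bigr => b _ /=.
    by case: ifP => _ //; rewrite scale0r.
  by apply/eqP; rewrite subr_eq0; apply/eqP; rewrite [RHS]fv big_cons.
have fx_gt0 : 0 < f x.
  have := fz a aF; rewrite eqxx /= addr0 lt_def f0 andbT => fxea.
  apply/eqP => fx0; move: fxea; rewrite fx0 mul0r sub0r => /eqP.
  by rewrite oppr_eq0 oner_eq0.
move=> b bF ba; have := fz b bF; rewrite ba (negbTE ba) subr0.
by have := f0 b; nra.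
Qed.

Lemma good_position_sign b0 b1 : b0 \in F -> b1 \in F ->
  e b0 < 0 -> 0 < e b1 -> good_position (x :: F) ->
  exists2 a, a \in F & {in F, forall b, b != a -> e b <= 0}.
Proof.
move=> b0F b1F eb0 eb1 good.
have [[a] | none] :=
  EM (exists2 a, a \in x :: F & in_pos (filter (predC1 a) (x :: F)) a); last first.
  case: good; split=> [|a aA pa]; first exact: conv_excluded b1F eb1.
  by apply: none; exists a.
rewrite in_cons => /orP[/eqP -> | aF pa]; last by exists a => //; apply: facet_sign.
by rewrite /= eqxx /= -rem_filter // rem_id // => /(pos_excluded b0F eb0).
Qed.

End SignPattern.

Section TwoBlocks.
Variables (R : realType) (n k : nat).
Local Notation V := 'rV[R]_n.
Variables (X : seq V) (Xs : 'I_k -> seq V) (alpha : 'I_k -> V -> R).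
Hypothesis Xs_aff : forall i, aff_indep (Xs i).
Hypothesis alpha_gt0 : forall i, {in Xs i, forall a, 0 < alpha i a}.
Hypothesis alpha_dep : forall i, \sum_(a <- Xs i) alpha i a *: a = 0.
Hypothesis Xs_full : (\sum_(i < k) <<Xs i>>)%VS = fullv.
Hypothesis Xs_direct : directv (\sum_(i < k) <<Xs i>>)%VS.
Hypothesis Xs_sub : forall i, {subset Xs i <= X}.
Hypothesis Xs_disjoint : forall i j, i != j -> forall b, b \in Xs i -> b \notin Xs j.
Hypothesis X_good : forall A : seq V, uniq A -> size A = n.+1 -> {subset A <= X} ->
  good_position A.

Variables (x : V) (y q : 'I_k -> V) (c : 'I_k -> V -> R).
Hypothesis x_in : x \in X.
Hypothesis x_notin_span : forall i, x \notin <<Xs i>>%VS.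
Hypothesis x_sum : x = \sum_(i < k) y i.
Hypothesis y_cone : forall i, [/\ q i \in Xs i, {in Xs i, forall a, 0 <= c i a},
  c i (q i) = 0 & y i = \sum_(a <- Xs i) c i a *: a].

Let q_in i : q i \in Xs i. Proof. by case: (y_cone i). Qed.
Let c_ge0 i : {in Xs i, forall a, 0 <= c i a}. Proof. by case: (y_cone i). Qed.
Let c_q i : c i (q i) = 0. Proof. by case: (y_cone i). Qed.
Let y_def i : y i = \sum_(a <- Xs i) c i a *: a. Proof. by case: (y_cone i). Qed.

Lemma support_point i : y i != 0 -> exists2 p, p \in Xs i & 0 < c i p.
Proof.
move=> yi; apply: contrapT => none; move/eqP: yi; apply.
rewrite y_def big_seq big1 // => a aX; have := c_ge0 aX.
rewrite le_eqVlt => /orP[/eqP <-|ca]; first by rewrite scale0r.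
by case: none; exists a.
Qed.

Lemma good_extension (r : 'I_k -> V) : (forall j, r j \in Xs j) ->
  x \notin skeleton_basis Xs r /\ good_position (x :: skeleton_basis Xs r).
Proof.
move=> r_in; have x_notF : x \notin skeleton_basis Xs r.
  apply/negP; rewrite mem_skeleton_basis => /existsP [j /punctured_sub xj].
  by move: (x_notin_span j); rewrite memv_span.
split=> //; apply: X_good.
- rewrite /= x_notF free_uniq //.
  exact: free_skeleton_basis Xs_aff alpha_gt0 alpha_dep Xs_direct r_in.
- by rewrite /= (size_skeleton_basis Xs_aff alpha_gt0 alpha_dep Xs_direct r_in Xs_full).
- move=> a; rewrite in_cons => /orP[/eqP -> //|].
  by rewrite mem_skeleton_basis => /existsP [j /punctured_sub /Xs_sub].
Qed.

(* Pivot block i0 at a point p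
   of positive weight, remove p from block i0 and q j from every other
   block: x :: (the resulting basis) is in good position, and the
   coordinates of x take both signs (at q i0 and in block j1). *)
Lemma concentration i0 j1 : j1 != i0 -> y j1 != 0 -> y i0 != 0 ->
  exists s, forall j, j != i0 -> {in Xs j, forall b, b != s -> c j b = 0}.
Proof.
move=> j1i0 yj1 yi0; have [p pX cp] := support_point yi0.
have [b1 b1X cb1] := support_point yj1.
have [d [dq y_pivot]] := pivot_combination (@alpha_gt0 i0) (alpha_dep i0)
  (Xs_aff i0).1 pX (q_in i0) cp (c_q i0).
pose r j := if j == i0 then p else q j.
have r_in j : r j \in Xs j by rewrite /r; case: eqP => [->|_]; [exact: pX | exact: q_in].
pose coef j := if j == i0 then d else c j.
have [e [e_coef e_sum]] := skeleton_coord r Xs_disjoint coef.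
set F := skeleton_basis Xs r.
have x_coord : x = \sum_(b <- F) e b *: b.
  rewrite -e_sum x_sum; apply: eq_bigr => j _; rewrite /coef /punctured /r y_def.
  case: eqP => [->|_]; first exact: y_pivot.
  exact: big_drop_zero (Xs_aff j).1 (q_in j) (c_q j).
have F_free : free F := free_skeleton_basis Xs_aff alpha_gt0 alpha_dep Xs_direct r_in.
have [x_notF good] := good_extension r_in.
have q0P : q i0 \in punctured Xs r i0.
  rewrite mem_punctured /r eqxx q_in andbT.
  by apply: contraTneq cp => <-; rewrite c_q ltxx.
have b1P : b1 \in punctured Xs r j1.
  rewrite mem_punctured /r (negbTE j1i0) b1X andbT.
  by apply: contraTneq cb1 => ->; rewrite c_q ltxx.
have e_q0 : e (q i0) < 0 by rewrite (e_coef _ _ q0P) /coef eqxx; exact: dq.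
have e_b1 : 0 < e b1 by rewrite (e_coef _ _ b1P) /coef (negbTE j1i0).
have [a _ e_le0] := good_position_sign F_free x_notF x_coord
  (punctured_basis q0P) (punctured_basis b1P) e_q0 e_b1 good.
exists a => j ji0 b bX ba; have [->|bq] := eqVneq b (q j); first exact: c_q.
have bP : b \in punctured Xs r j by rewrite mem_punctured /r (negbTE ji0) bq.
apply/eqP; rewrite eq_le c_ge0 // andbT.
have := e_coef _ _ bP; rewrite /coef (negbTE ji0) => <-.
exact: e_le0 (punctured_basis bP) ba.
Qed.

Lemma y_span i : y i \in <<Xs i>>%VS.
Proof. by rewrite y_def big_seq rpred_sum // => a aX; rewrite rpredZ // memv_span. Qed.

(* Two applications of concentration, with the roles of the two blocks
   swapped, show that x = y i0 + y j with both terms on a single ray. *)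
Lemma two_block_cone : x != 0 -> exists i j : 'I_k, i != j /\
  exists xi, exists xj, [/\ xi \in Xs i, xj \in Xs j & in_pos [:: xi; xj] x].
Proof.
move=> x0.
have [/existsP [i0 yi0] | /existsPn y0] := boolP [exists i, y i != 0]; last first.
  by move: x0; rewrite x_sum big1 ?eqxx // => i _; apply/eqP/negbNE/y0.
have [/existsP [j /andP[ji0 yj]] | /existsPn yj0] :=
  boolP [exists j, (j != i0) && (y j != 0)]; last first.
  have := x_notin_span i0; rewrite x_sum (bigD1 i0) //= big1 ?addr0 ?y_span //.
  by move=> j ji0; apply/eqP; have := yj0 j; rewrite ji0 /= negbK.
have i0j : i0 != j by rewrite eq_sym.
have [s1 Hs1] := concentration ji0 yj yi0.
have [s2 Hs2] := concentration i0j yi0 yj.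
have [s1X ys1] := single_support (Xs_aff j).1 (Hs1 j ji0) (y_def j) yj.
have [s2X ys2] := single_support (Xs_aff i0).1 (Hs2 i0 i0j) (y_def i0) yi0.
have y_other l : l != i0 -> l != j -> y l = 0.
  move=> li0 lj; apply/eqP; apply: contraTT s1X => yl.
  have [s1l _] := single_support (Xs_aff l).1 (Hs1 l li0) (y_def l) yl.
  exact: Xs_disjoint _ _ lj _ s1l.
exists i0, j; split=> //; exists s2, s1; split=> //.
apply: (in_pos_pair (c_ge0 s2X) (c_ge0 s1X)).
rewrite x_sum (bigD1 i0) //= (bigD1 j) //= big1 ?addr0 -?ys1 -?ys2 //.
by move=> l /andP[li0 lj]; apply: y_other.
Qed.

End TwoBlocks.

Theorem proposition5p1 (R : realType) (n : nat) (X : seq 'rV[R]_n)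
  (k : nat) (Xs : 'I_k -> seq 'rV[R]_n) :
  standing X -> skeleton X Xs ->
  forall x, x \in X -> (forall i, x \notin <<Xs i>>%VS) ->
  exists i j : 'I_k, i != j /\
    exists xi, exists xj, [/\ xi \in Xs i, xj \in Xs j & in_pos [:: xi; xj] x].
Proof.
move=> [X0 _ _ X_good] [Xs_sub Xs_disjoint Xs_simplex Xs_full Xs_direct] x xX x_notin.
have Xs_uniq i : uniq (Xs i) := (Xs_simplex i).1.1.
have [alpha Halpha] := choice (fun i => relint_dependence (Xs_uniq i) (Xs_simplex i).2).
have /memv_sumP [y y_in x_sum] : x \in (\sum_(i < k) <<Xs i>>)%VS.
  by rewrite Xs_full memvf.
have [q Hq] := choice (fun i => simplex_cone (Halpha i).1 (Halpha i).2 (Xs_uniq i)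
  (conv_nonempty (Xs_simplex i).2.1) (y_in i isT)).
have [c Hc] := choice Hq.
apply: (two_block_cone (fun i => (Xs_simplex i).1) (fun i => (Halpha i).1)
  (fun i => (Halpha i).2) Xs_full Xs_direct Xs_sub Xs_disjoint X_good xX x_notin x_sum Hc).
by apply: contraNneq X0 => <-.
Qed.
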